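(* Let ${\mathsf K},{\mathsf N}\ge1$, $t\in\{0,\ldots,{\mathsf K}-1\}$, and $\mathbb{D}\in\mathbb{F}_2^{{\mathsf K}\times{\mathsf N}}$ with rows $\mathbf y_1,\ldots,\mathbf y_{\mathsf K}$. Let $\mathcal L\subseteq[{\mathsf K}]$ satisfy $|\mathcal L|=\mathrm{rank}_2(\mathbb{D}_{\mathcal L})=\mathrm{rank}_2(\mathbb{D})$, let $\mathcal A\subseteq[{\mathsf K}]\setminus\mathcal L$ with $|\mathcal A|=t+1$, and set $\mathcal B=\mathcal L\cup\mathcal A$. Let $\mathcal W\subseteq\mathcal B$ with $|\mathcal W|=t$ and $i\in[{\mathsf N}]$. Then the number of users $k\in\mathcal B\setminus\mathcal W$ satisfying both $\mathrm{rank}_2(\mathbb{D}_{\mathcal B\setminus(\mathcal W\cup\{k\})})=|\mathcal L|$ and $y_{k,i}\neq0$ is even. Equivalently: in the sum $\bigoplus_{\mathcal V\in\mathscr V_{\mathcal B}}W_{\mathcal B\setminus\mathcal V}$, the number of multicast messages $W_{\mathcal B\setminus\mathcal V}$ (with $\mathcal V\in\mathscr V_{\mathcal B}$) that contain the subfile $F_{i,\mathcal W}$ with nonzero coefficient is even.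
   Context: $\mathbb{D}_{\mathcal S}$ denotes the submatrix of $\mathbb{D}$ formed by the rows with indices in $\mathcal S$. Subfiles: for $i\in[{\mathsf N}]$ and $\mathcal W\subseteq[{\mathsf K}]$ with $|\mathcal W|=t$, $F_{i,\mathcal W}$ is a vector over $\mathbb{F}_2$ (all of a common length). Blocks: $B_{k,\mathcal W}=\sum_{n\in[{\mathsf N}]}y_{k,n}F_{n,\mathcal W}$. Multicast messages: for $\mathcal S\subseteq[{\mathsf K}]$ with $|\mathcal S|=t+1$, $W_{\mathcal S}=\bigoplus_{k\in\mathcal S}B_{k,\mathcal S\setminus\{k\}}$ (sum over $\mathbb{F}_2$). For $\mathcal B\subseteq[{\mathsf K}]$, $\mathscr V_{\mathcal B}$ is the family of subsets $\mathcal V\subseteq\mathcal B$ with $|\mathcal V|=|\mathcal L|$ and $\mathrm{rank}_2(\mathbb{D}_{\mathcal V})=|\mathcal L|$. Note that for $\mathcal V\in\mathscr V_{\mathcal B}$, $|\mathcal B\setminus\mathcal V|=t+1$, and $F_{i,\mathcal W}$ appears in $W_{\mathcal B\setminus\mathcal V}$ with coefficient $y_{k,i}$ exactly when $\mathcal B\setminus\mathcal V=\mathcal W\cup\{k\}$. *)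

From HB Require Import structures.
From mathcomp Require Import all_boot all_order all_algebra.
Set Implicit Arguments. Unset Strict Implicit. Unset Printing Implicit Defensive.
Import GRing.Theory.
Local Open Scope ring_scope.

Definition rows_of (R : Type) (K N : nat) (D : 'M[R]_(K, N)) (S : {set 'I_K})
  : 'M[R]_(#|S|, N) :=
  rowsub (fun j : 'I_#|S| => @enum_val _ (pred_of_set S) j) D.

From HB Require Import structures.
From mathcomp Require Import all_boot all_order all_algebra.
Set Implicit Arguments. Unset Strict Implicit. Unset Printing Implicit Defensive.
Import GRing.Theory.
Local Open Scope ring_scope.

(* Set U := B :\: W, a set of #|L| + 1 rows inside a matrix of rank #|L|, so D_U
   has a nonzero linear dependency c supported on U.  If D_U has rank #|L|, that
   dependency is unique up to scaling, and removing row k keeps the rank exactly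
   when c_k != 0.  The users counted are thus those k with c_k y_{k,i} != 0, and
   over F_2 their number is the value of (c *m D)_i = 0 modulo 2. *)

Section RowSelection.
Variables (F : fieldType) (K : nat).

Definition supported_on (S : {set 'I_K}) (v : 'rV[F]_K) :=
  forall x, x \notin S -> v 0 x = 0.

Definition rowsel (S : {set 'I_K}) : 'M[F]_(#|S|, K) :=
  rowsub (fun j : 'I_#|S| => @enum_val _ (pred_of_set S) j) 1%:M.

Lemma rows_ofE N (D : 'M[F]_(K, N)) (S : {set 'I_K}) : rows_of D S = rowsel S *m D.
Proof. exact: rowsubE. Qed.

Lemma mul_rowsel_coef (S : {set 'I_K}) (w : 'rV_#|S|) (x : 'I_K) :
  (w *m rowsel S) 0 x = \sum_(j | enum_val j == x) w 0 j.
Proof.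
rewrite mxE [RHS]big_mkcond; apply: eq_bigr => j _.
by rewrite !mxE; case: eqP; rewrite ?mulr1 ?mulr0.
Qed.

Lemma supported_rowsel (S : {set 'I_K}) (w : 'rV_#|S|) : supported_on S (w *m rowsel S).
Proof.
move=> x Sx; rewrite mul_rowsel_coef big_pred0 // => j.
by apply: contraNF Sx => /eqP <-; apply: enum_valP.
Qed.

Lemma mul_rowsel_enum_val (S : {set 'I_K}) (w : 'rV_#|S|) (j : 'I_#|S|) : (w *m rowsel S) 0 (enum_val j) = w 0 j.
Proof.
rewrite mul_rowsel_coef (big_pred1 j) // => j'.
by apply/eqP/eqP => [/enum_val_inj | ->].
Qed.

Lemma row_free_rowsel (S : {set 'I_K}) : row_free (rowsel S).
Proof.
apply: inj_row_free => w w0; apply/rowP => j.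
by rewrite -mul_rowsel_enum_val w0 !mxE.
Qed.

Lemma supported_onE (S : {set 'I_K}) (v : 'rV[F]_K) :
  supported_on S v -> v = (\row_j v 0 (enum_val j)) *m rowsel S.
Proof.
move=> suppv; apply/rowP => x; have [Sx | nSx] := boolP (x \in S).
  by rewrite -(enum_rankK_in Sx Sx) mul_rowsel_enum_val mxE.
by rewrite suppv // supported_rowsel.
Qed.

End RowSelection.

Arguments rowsel {F K}.

Section RowsOf.
Variables (F : fieldType) (K N : nat) (D : 'M[F]_(K, N)).

Lemma row_sub_rows_of (S : {set 'I_K}) x : x \in S -> (row x D <= rows_of D S)%MS.
Proof. by move=> Sx; rewrite -(enum_rankK_in Sx Sx) -row_rowsub row_sub. Qed.

Lemma rows_ofS (S T : {set 'I_K}) : S \subset T -> (rows_of D S <= rows_of D T)%MS.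
Proof.
move=> ST; apply/row_subP => j; rewrite row_rowsub.
by apply: row_sub_rows_of; apply: (subsetP ST); apply: enum_valP.
Qed.

Lemma rank_rows_of_le (S : {set 'I_K}) : (\rank (rows_of D S) <= \rank D)%N.
Proof. exact/mxrankS/rowsub_sub. Qed.

Lemma rank_rows_of_ltP (S : {set 'I_K}) :
  reflect (exists v : 'rV_K, [/\ v != 0, v *m D = 0 & supported_on S v])
          (\rank (rows_of D S) < #|S|)%N.
Proof.
rewrite ltn_neqAle rank_leq_row andbT; apply: (iffP idP) => [notfree | [v [vnz vD suppv]]].
  have /rowV0Pn[w wker wnz] : kermx (rows_of D S) != 0.
    by rewrite -mxrank_eq0 mxrank_ker subn_eq0 -ltnNge ltn_neqAle notfree rank_leq_row.
  exists (w *m rowsel S); split; last exact: supported_rowsel.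
    by rewrite mulmx_free_eq0 ?row_free_rowsel.
  by apply/eqP; rewrite -mulmxA -rows_ofE -sub_kermx.
apply: contra vnz => free; rewrite (supported_onE suppv) mulmx_free_eq0 ?row_free_rowsel //.
by rewrite -(mulmx_free_eq0 _ free) rows_ofE mulmxA -supported_onE // vD.
Qed.

Lemma row_sub_rows_of_setD1 (S : {set 'I_K}) (c : 'rV_K) k :
  c *m D = 0 -> supported_on S c -> c 0 k != 0 -> (row k D <= rows_of D (S :\ k))%MS.
Proof.
move=> cD suppc ck.
have rowkE : row k D = - (c 0 k)^-1 *: \sum_(y | y != k) c 0 y *: row y D.
  move: cD; rewrite mulmx_sum_row (bigD1 k) //= => /eqP; rewrite addr_eq0 => /eqP.
  by move/(congr1 ( *:%R (c 0 k)^-1)); rewrite scalerA mulVf // scale1r scalerN -scaleNr.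
rewrite rowkE scalemx_sub // summx_sub // => y yk.
have [Sy | nSy] := boolP (y \in S); last by rewrite suppc // scale0r sub0mx.
by rewrite scalemx_sub // row_sub_rows_of // !inE yk.
Qed.

Lemma rank_rows_of_setD1 (S : {set 'I_K}) (c : 'rV_K) k :
  c != 0 -> c *m D = 0 -> supported_on S c ->
  (\rank (rows_of D (S :\ k)) == #|S :\ k|) =
  (c 0 k != 0) && (\rank (rows_of D S) == #|S :\ k|).
Proof.
move=> cnz cD suppc; have [ck0 | ck] := eqVneq (c 0 k) 0.
  apply/negbTE; rewrite neq_ltn; apply/orP; left; apply/rank_rows_of_ltP.
  by exists c; split=> // x; rewrite !inE negb_and negbK => /orP[/eqP-> | /suppc].
rewrite (@eqmx_rank _ _ _ _ (rows_of D (S :\ k)) (rows_of D S)) //.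
rewrite rows_ofS ?subD1set //=; apply/row_subP => j; rewrite row_rowsub.
have [-> | jk] := eqVneq (enum_val j) k; first exact: row_sub_rows_of_setD1 cD suppc ck.
by rewrite row_sub_rows_of // !inE jk enum_valP.
Qed.

End RowsOf.

Lemma F2_natr_neq0 (x : 'F_2) : x = (x != 0)%:R.
Proof. by case: x => [[|[|m]] lt2] //; apply: val_inj. Qed.

Lemma F2_sum_mul_eq0_even (I : finType) (a b : I -> 'F_2) :
  \sum_k a k * b k = 0 -> ~~ odd #|[set k | (a k != 0) && (b k != 0)]|.
Proof.
under eq_bigr => k _ do rewrite [a k * b k]F2_natr_neq0 mulf_eq0 negb_or mulrb.
rewrite -big_mkcond sumr_const -dvdn2 /= => cnt0.
by rewrite cardsE (dvdn_pcharf (pchar_Fp (isT : prime 2))) cnt0.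
Qed.

Theorem lemma1 (K N t : nat) (HK : (1 <= K)%N) (HN : (1 <= N)%N) (Ht : (t < K)%N)
  (D : 'M['F_2]_(K, N)) (L A W : {set 'I_K}) (i : 'I_N) :
  #|L| = \rank (rows_of D L) ->
  \rank (rows_of D L) = \rank D ->
  A \subset ~: L ->
  #|A| = t.+1 ->
  W \subset (L :|: A) ->
  #|W| = t ->
  ~~ odd #|[set k in (L :|: A) :\: W |
             (\rank (rows_of D ((L :|: A) :\: (W :|: [set k]))) == #|L|)
             && (D k i != 0)]|.
Proof.
move=> rL rD AL cA WB cW; set U := (L :|: A) :\: W.
have cU : #|U| = #|L|.+1.
  rewrite cardsDS // cW; move: (leq_card_setU L A).2; rewrite disjoint_sym disjoints_subset AL.
  by move/eqP->; rewrite cA addnS subSn ?leq_addl // addnK.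
have [c [cnz cD suppc]] : exists c : 'rV_K, [/\ c != 0, c *m D = 0 & supported_on U c].
  apply/rank_rows_of_ltP; apply: leq_ltn_trans (rank_rows_of_le D U) _.
  by rewrite -rD -rL cU.
rewrite (_ : [set k in U | _] = if \rank (rows_of D U) == #|L|
           then [set k | (c 0 k != 0) && (D k i != 0)] else set0).
  case: ifP => _; last by rewrite cards0.
  by apply: F2_sum_mul_eq0_even; move/matrixP: cD => /(_ 0 i); rewrite !mxE.
apply/setP => k; rewrite in_set -setDDl -/U.
have [kU | nkU] := boolP (k \in U); last by case: ifP; rewrite ?inE ?suppc ?eqxx.
have cUk : #|U :\ k| = #|L| by move: cU; rewrite (cardsD1 k) kU => -[].
by rewrite -cUk (rank_rows_of_setD1 k cnz cD suppc); case: ifP; rewrite ?inE ?andbT ?andbF.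
Qed.
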